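(* Let $F^\pm\in\mathcal E(\lambda,\Lambda)$, let $f^\pm$ be uniformly continuous on $B_1^\pm$ and $g$ uniformly continuous on $T$. Let $u$ be a bounded viscosity subsolution of the flat problem (FP). Fix $0<\rho<1$. Then for every sufficiently small $\varepsilon>0$, the upper $\varepsilon$-envelope $u^\varepsilon$ is a viscosity subsolution of $$F^\pm(D^2u^\varepsilon)=f^\pm_\varepsilon\ \text{in }B_r^\pm,\qquad (u^\varepsilon)^+_{x_n}-(u^\varepsilon)^-_{x_n}=g_\varepsilon\ \text{on }T_r=B_r\cap\{x_n=0\},$$ for any $r\le\rho-r_\varepsilon$, where $r_\varepsilon=(2\varepsilon\|u\|_{L^\infty(B_1)})^{1/2}$, $f^\pm_\varepsilon=f^\pm-\omega_{f^\pm}(r_\varepsilon)$ and $g_\varepsilon=g-\omega_g(r_\varepsilon)$.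
   Context: $\mathcal E(\lambda,\Lambda)$: $F:\mathcal S^n\to\mathbb R$ with $F(0)=0$ and $\lambda\|N\|\le F(M+N)-F(M)\le\Lambda\|N\|$ for $N\ge0$. Flat setting: $B_r^\pm=B_r\cap\{\pm x_n>0\}$, $T=B_1\cap\{x_n=0\}$; (FP): $F^\pm(D^2u)=f^\pm$ in $B_1^\pm$, $u^+_{x_n}-u^-_{x_n}=g$ on $T$. Viscosity subsolution of (FP): $u$ USC such that for $\varphi$ touching $u$ from above at $x_0$: if $x_0\in B_1^\pm$ and $\varphi$ is $C^2$ near $x_0$ then $F^\pm(D^2\varphi(x_0))\ge f^\pm(x_0)$; if $x_0\in T$ and $\varphi$ is continuous with restrictions $\varphi^\pm$ to $\overline{B_\delta(x_0)\cap\{\pm x_n>0\}}$ of class $C^2$, then $\varphi^+_{x_n}(x_0)-\varphi^-_{x_n}(x_0)\ge g(x_0)$ (the same notion on $B_r$, $T_r$ with $f_\varepsilon^\pm,g_\varepsilon$). Upper $\varepsilon$-envelope in the $x'$-direction: for $y=(y',y_n)\in\overline{B_\rho}$, $u^\varepsilon(y',y_n)=\sup\{u(x',y_n)-\frac1\varepsilon|x'-y'|^2:(x',y_n)\in\overline{B_\rho}\}$. Modulus of continuity: $\omega_h(r)=\sup_{|x-y|\le r}|h(x)-h(y)|$. *)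

(* Points of R^d are row vectors 'rV[R]_d.
   The dimension is d = n.+1 (so d >= 1); the last coordinate (index ord_max)
   plays the role of x_n. *)
From HB Require Import structures.
From mathcomp Require Import all_boot all_order all_algebra.
From mathcomp Require Import all_classical all_reals all_analysis.
Set Implicit Arguments. Unset Strict Implicit. Unset Printing Implicit Defensive.
Import Order.TTheory GRing.Theory Num.Theory.
Import numFieldNormedType.Exports.
Local Open Scope classical_set_scope.
Local Open Scope ring_scope.

Section Defs.
Variables (R : realType) (n : nat).
Local Notation pt := 'rV[R]_n.+1.

Definition xn (x : pt) : R := x 0 ord_max.

Definition enorm (x : pt) : R := Num.sqrt (\sum_i x 0 i ^+ 2).

Definition dist'2 (x y : pt) : R :=
  \sum_(i < n.+1 | i != ord_max) (x 0 i - y 0 i) ^+ 2.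

Definition eball (c : pt) (r : R) : set pt := [set x | enorm (x - c) < r].
Definition ecball (c : pt) (r : R) : set pt := [set x | enorm (x - c) <= r].

Definition Bplus (r : R) : set pt := [set x | enorm x < r /\ 0 < xn x].
Definition Bminus (r : R) : set pt := [set x | enorm x < r /\ xn x < 0].
Definition Tflat (r : R) : set pt := [set x | enorm x < r /\ xn x = 0].

Definition symmetric (M : 'M[R]_n.+1) : Prop := M^T = M.
Definition psd (N : 'M[R]_n.+1) : Prop := forall v : pt, 0 <= (v *m N *m v^T) 0 0.

Definition opnorm (N : 'M[R]_n.+1) : R :=
  sup [set enorm (N *m v^T)^T | v in [set v : pt | enorm v = 1]].

(* F in E(lambda, Lambda), F : S^n -> R (only values on symmetric matrices matter) *)
Definition elliptic (lam Lam : R) (F : 'M[R]_n.+1 -> R) : Prop :=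
  F 0 = 0 /\
  forall M N : 'M[R]_n.+1, symmetric M -> symmetric N -> psd N ->
    lam * opnorm N <= F (M + N) - F M /\ F (M + N) - F M <= Lam * opnorm N.

Definition ebase (i : 'I_n.+1) : pt := delta_mx 0 i.

Definition pderiv (i : 'I_n.+1) (phi : pt -> R) : pt -> R :=
  fun x => derive phi x (ebase i).

Definition C2_on (U : set pt) (phi : pt -> R) : Prop :=
  forall x, U x -> forall i j : 'I_n.+1,
    derivable phi x (ebase i) /\
    derivable (pderiv i phi) x (ebase j) /\
    {for x, continuous (pderiv j (pderiv i phi))}.

Definition hessian (phi : pt -> R) (x : pt) : 'M[R]_n.+1 :=
  \matrix_(i, j) pderiv j (pderiv i phi) x.

Definition usc_on (D : set pt) (u : pt -> R) : Prop :=
  forall x, D x -> forall e : R, 0 < e -> exists2 d : R, 0 < d &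
    forall y, D y -> enorm (y - x) < d -> u y < u x + e.

Definition touches_above (D : set pt) (u phi : pt -> R) (x0 : pt) (d : R) : Prop :=
  phi x0 = u x0 /\ forall y, D y -> eball x0 d y -> u y <= phi y.

Definition visc_sub (Fp Fm : 'M[R]_n.+1 -> R) (fp fm g : pt -> R) (r : R)
    (u : pt -> R) : Prop :=
  usc_on (eball 0 r) u /\
  (forall x0 phi d, Bplus r x0 -> 0 < d -> C2_on (eball x0 d) phi ->
     touches_above (eball 0 r) u phi x0 d -> fp x0 <= Fp (hessian phi x0)) /\
  (forall x0 phi d, Bminus r x0 -> 0 < d -> C2_on (eball x0 d) phi ->
     touches_above (eball 0 r) u phi x0 d -> fm x0 <= Fm (hessian phi x0)) /\
  (forall x0 phi d (psip psim : pt -> R) d', Tflat r x0 -> 0 < d -> d < d' ->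
     {in eball x0 d, continuous phi} ->
     (* phi^+ : restriction to closure(B_d(x0) /\ {x_n > 0}) is C^2 (extends to C^2) *)
     C2_on (eball x0 d') psip ->
     (forall y, ecball x0 d y -> 0 <= xn y -> phi y = psip y) ->
     (* phi^- : restriction to closure(B_d(x0) /\ {x_n < 0}) is C^2 *)
     C2_on (eball x0 d') psim ->
     (forall y, ecball x0 d y -> xn y <= 0 -> phi y = psim y) ->
     touches_above (eball 0 r) u phi x0 d ->
     g x0 <= pderiv ord_max psip x0 - pderiv ord_max psim x0).

Definition unif_cont_on (D : set pt) (h : pt -> R) : Prop :=
  forall e : R, 0 < e -> exists2 d : R, 0 < d &
    forall x y, D x -> D y -> enorm (x - y) < d -> `|h x - h y| < e.

Definition modulus (D : set pt) (h : pt -> R) (r : R) : R :=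
  sup [set z | exists x y, [/\ D x, D y, enorm (x - y) <= r & z = `|h x - h y| ]].

Definition supnorm1 (u : pt -> R) : R := sup [set `|u x| | x in eball 0 1].

Definition uenv (u : pt -> R) (rho eps : R) (y : pt) : R :=
  sup [set u x - dist'2 x y / eps |
         x in [set x | ecball 0 rho x /\ xn x = xn y]].

End Defs.

From HB Require Import structures.
From mathcomp Require Import all_boot all_order all_algebra.
From mathcomp Require Import all_classical all_reals all_analysis.
From mathcomp Require Import ring lra zify.
Set Implicit Arguments. Unset Strict Implicit. Unset Printing Implicit Defensive.
Import Order.TTheory GRing.Theory Num.Theory.
Import numFieldNormedType.Exports.
Local Open Scope classical_set_scope.
Local Open Scope ring_scope.

(* The supremum defining u^eps(y) is attained, by compactness of the closed
   ball and upper semicontinuity of u, and comparing with the competitor x = y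
   shows that a maximizer x* lies on the horizontal slice of y with
   |x* - y|^2 <= 2 eps ||u||, i.e. within r_eps of y.  If phi touches u^eps
   from above at x0, the horizontally translated test function
   z |-> phi(z - (x* - x0)) + |x*' - x0'|^2 / eps touches u from above at x*,
   which lies in the same half-ball (or on T) since x_n is unchanged.
   Translation preserves Hessians and x_n-derivatives, so the inequality of u
   at x* transfers to x0 up to the oscillation of f^+-, g over distances
   r_eps, which the moduli of continuity bound.  The same compactness
   argument gives upper semicontinuity of u^eps. *)

Section EuclideanNorm.
Variables (R : realType) (n : nat).
Local Notation pt := 'rV[R]_n.+1.
Implicit Types x y : pt.

Lemma enorm_ge0 x : 0 <= enorm x.
Proof. exact: sqrtr_ge0. Qed.

Lemma enorm2 x : enorm x ^+ 2 = \sum_i x 0 i ^+ 2.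
Proof. by rewrite sqr_sqrtr // sumr_ge0 // => i _; rewrite sqr_ge0. Qed.

Lemma enorm0 : enorm (0 : pt) = 0.
Proof. by rewrite /enorm big1 ?sqrtr0 // => i _; rewrite mxE expr0n. Qed.

Lemma enormN x : enorm (- x) = enorm x.
Proof. by congr Num.sqrt; apply: eq_bigr => i _; rewrite mxE sqrrN. Qed.

Lemma enormBC x y : enorm (x - y) = enorm (y - x).
Proof. by rewrite -enormN opprB. Qed.

Lemma coord_le_enorm x i : `|x 0 i| <= enorm x.
Proof.
rewrite -sqrtr_sqr ler_wsqrtr // (bigD1 i) //= lerDl.
by apply: sumr_ge0 => j _; rewrite sqr_ge0.
Qed.

(* Lagrange's identity: the gap in Cauchy-Schwarz is half a sum of squares. *)
Lemma sum_mul_sqr_le x y :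
  (\sum_i x 0 i * y 0 i) ^+ 2 <= (\sum_i x 0 i ^+ 2) * (\sum_i y 0 i ^+ 2).
Proof.
set X := \sum_i x 0 i ^+ 2; set Y := \sum_i y 0 i ^+ 2; set P := \sum_i _.
have lagrange : \sum_i \sum_j (x 0 i * y 0 j - x 0 j * y 0 i) ^+ 2
    = 2 * (X * Y - P ^+ 2).
  have sqrB i j : (x 0 i * y 0 j - x 0 j * y 0 i) ^+ 2 =
      x 0 i ^+ 2 * y 0 j ^+ 2 + x 0 j ^+ 2 * y 0 i ^+ 2
      - 2 * (x 0 i * y 0 i * (x 0 j * y 0 j)) by ring.
  under eq_bigr => i _ do under eq_bigr => j _ do rewrite sqrB.
  under eq_bigr => i _ do rewrite sumrB big_split /=.
  rewrite sumrB big_split /=.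
  have -> : \sum_i \sum_j x 0 i ^+ 2 * y 0 j ^+ 2 = X * Y.
    by rewrite mulr_suml; apply: eq_bigr => i _; rewrite mulr_sumr.
  have -> : \sum_i \sum_j x 0 j ^+ 2 * y 0 i ^+ 2 = X * Y.
    rewrite mulrC mulr_suml; apply: eq_bigr => i _; rewrite mulr_sumr.
    by apply: eq_bigr => j _; rewrite mulrC.
  have -> : \sum_i \sum_j 2 * (x 0 i * y 0 i * (x 0 j * y 0 j)) = 2 * P ^+ 2.
    rewrite expr2 mulr_suml mulr_sumr; apply: eq_bigr => i _.
    by rewrite !mulr_sumr.
  ring.
have : 0 <= \sum_i \sum_j (x 0 i * y 0 j - x 0 j * y 0 i) ^+ 2.
  by apply: sumr_ge0 => i _; apply: sumr_ge0 => j _; rewrite sqr_ge0.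
by rewrite lagrange pmulr_rge0 // subr_ge0.
Qed.

Lemma enormD x y : enorm (x + y) <= enorm x + enorm y.
Proof.
have hx := enorm_ge0 x; have hy := enorm_ge0 y.
rewrite {1}/enorm -(ger0_norm (addr_ge0 hx hy)) -sqrtr_sqr ler_wsqrtr //.
have dot_le : \sum_i x 0 i * y 0 i <= enorm x * enorm y.
  rewrite -(ger0_norm (mulr_ge0 hx hy)) -sqrtr_sqr exprMn !enorm2.
  by rewrite (le_trans (ler_norm _)) // -sqrtr_sqr ler_wsqrtr // sum_mul_sqr_le.
have -> : \sum_i (x + y) 0 i ^+ 2 =
    \sum_i x 0 i ^+ 2 + 2 * \sum_i x 0 i * y 0 i + \sum_i y 0 i ^+ 2.
  by rewrite mulr_sumr -!big_split /=; apply: eq_bigr => i _; rewrite mxE; ring.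
rewrite -!enorm2; nra.
Qed.

Lemma enorm_le_addB x y : enorm y <= enorm x + enorm (y - x).
Proof. by rewrite (le_trans _ (enormD x (y - x))) // addrC subrK. Qed.

Lemma nbhs_enorm_ball (p : pt) (d : R) : 0 < d -> nbhs p (eball p d).
Proof.
move=> d0; have N0 : 0 < (n.+2)%:R :> R by rewrite ltr0n.
apply/nbhs_ballP; exists (d / (n.+2)%:R) => [|x [_ Hx]]; first exact: divr_gt0.
have coord_le i : (x - p) 0 i ^+ 2 <= (d / (n.+2)%:R) ^+ 2.
  rewrite -real_normK ?num_real // lerXn2r ?nnegrE ?normr_ge0 ?divr_ge0 ?ltW //.
  by rewrite !mxE distrC; exact: Hx.
rewrite /eball /= -(ger0_norm (ltW d0)) -sqrtr_sqr ltr_sqrt ?exprn_gt0 //.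
apply: le_lt_trans (ler_sum _ (fun i _ => coord_le i)) _.
rewrite sumr_const card_ord -(mulr_natl _ n.+1) expr_div_n mulrA ltr_pdivrMr ?exprn_gt0 //.
by rewrite mulrC ltr_pM2l ?exprn_gt0 // -natrX ltr_nat; nia.
Qed.

Lemma enorm_cluster (S : R -> set pt) :
  (forall d, 0 < d -> S d !=set0) ->
  (forall d1 d2, 0 < d1 -> d1 <= d2 -> S d1 `<=` S d2) ->
  (forall d x, 0 < d -> S d x -> enorm x <= 1) ->
  exists p : pt, forall d e, 0 < d -> 0 < e -> exists2 x, S d x & eball p e x.
Proof.
move=> Sne Smono Sb.
pose F := filter_from [set d : R | 0 < d] S.
have PF : ProperFilter F.
  apply: filter_from_proper => [|d d0]; last exact: Sne.
  apply: filter_from_filter; first by exists 1; rewrite /= ltr01.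
  move=> i j i0 j0; exists (Order.min i j); first by rewrite /= lt_min i0 j0.
  have m0 : 0 < Order.min i j by rewrite lt_min i0 j0.
  by move=> x Sx; split; apply: (Smono _ _ m0 _ x Sx); rewrite ge_min lexx ?orbT.
have Fcube : F [set v : pt | forall i, `[-1, 1]%classic (v ord0 i)].
  exists 1 => //= x Sx i; rewrite /= in_itv /= -ler_norml.
  exact: le_trans (coord_le_enorm x i) (Sb 1 x ltr01 Sx).
have [|p [_ Cp]] := @rV_compact R n.+1 (fun _ => `[-1, 1]%classic) _ F PF Fcube.
  by move=> _; exact: segment_compact.
exists p => d e d0 e0; have FSd : F (S d) by exists d.
by have [x [Sx px]] := Cp _ _ FSd (nbhs_enorm_ball p e0); exists x.
Qed.

End EuclideanNorm.

Section Slices.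
Variables (R : realType) (n : nat).
Local Notation pt := 'rV[R]_n.+1.
Implicit Types x y z : pt.

Lemma eball0E x r : eball 0 r x = (enorm x < r).
Proof. by rewrite /eball /= subr0. Qed.

Lemma ecball0E x r : ecball 0 r x = (enorm x <= r).
Proof. by rewrite /ecball /= subr0. Qed.

Lemma dist'2_ge0 x y : 0 <= dist'2 x y.
Proof. by apply: sumr_ge0 => i _; rewrite sqr_ge0. Qed.

Lemma dist'2xx x : dist'2 x x = 0.
Proof. by rewrite /dist'2 big1 // => i _; rewrite subrr expr0n. Qed.

Lemma dist'2_translate z x y : dist'2 z (z - (x - y)) = dist'2 x y.
Proof. by apply: eq_bigr => i _; rewrite !mxE opprD opprK addrA subrr add0r. Qed.

Lemma translate_subr (z x y : pt) : z - (x - y) - y = z - x.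
Proof. by rewrite opprB [y - x]addrC addrA addrK. Qed.

Lemma eball_translate x y z e : eball x e z -> eball y e (z - (x - y)).
Proof. by rewrite /eball /= translate_subr. Qed.

Lemma ecball_translate x y z e : ecball x e z -> ecball y e (z - (x - y)).
Proof. by rewrite /ecball /= translate_subr. Qed.

Lemma xn_translate z x y : xn x = xn y -> xn (z - (x - y)) = xn z.
Proof. by rewrite /xn !mxE => ->; rewrite subrr oppr0 addr0. Qed.

Lemma enormB_slice x y : xn x = xn y -> enorm (x - y) = Num.sqrt (dist'2 x y).
Proof.
move=> xy; rewrite /enorm /dist'2 (bigD1 ord_max) //= !mxE -/(xn x) -/(xn y) xy.
by rewrite subrr expr0n add0r; congr Num.sqrt; apply: eq_bigr => i _; rewrite !mxE.
Qed.

Lemma dist'2_lipschitz x y x' y' :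
  enorm x <= 1 -> enorm y <= 1 -> enorm x' <= 1 -> enorm y' <= 1 ->
  dist'2 x y - dist'2 x' y' <= 4 * (n.+1)%:R * (enorm (x - x') + enorm (y - y')).
Proof.
move=> hx hy hx' hy'.
set E := enorm (x - x') + enorm (y - y').
have E0 : 0 <= E by rewrite addr_ge0 // enorm_ge0.
have coord_le (v : pt) i : enorm v <= 1 -> -1 <= v 0 i <= 1.
  by move=> hv; rewrite -ler_norml (le_trans (coord_le_enorm v i)).
rewrite /dist'2 -sumrB.
apply: (@le_trans _ _ (\sum_(i < n.+1 | i != ord_max) 4 * E)).
  apply: ler_sum => i _; set a := x 0 i - y 0 i; set b := x' 0 i - y' 0 i.
  have -> : a ^+ 2 - b ^+ 2 = (a - b) * (a + b) by ring.
  rewrite (le_trans (ler_norm _)) // normrM mulrC ler_pM ?normr_ge0 //.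
    move: (coord_le x i hx) (coord_le y i hy) (coord_le x' i hx') (coord_le y' i hy').
    by rewrite ler_norml /a /b => /andP[? ?] /andP[? ?] /andP[? ?] /andP[? ?]; lra.
  have -> : a - b = (x - x') 0 i - (y - y') 0 i by rewrite /a /b !mxE; ring.
  by rewrite (le_trans (ler_normB _ _)) // lerD ?coord_le_enorm.
rewrite big_mkcond /=; apply: (@le_trans _ _ (\sum_(i < n.+1) 4 * E)).
  by apply: ler_sum => i _; case: ifP => // _; rewrite mulr_ge0.
by rewrite sumr_const card_ord -(mulr_natr (4 * E)) mulrAC.
Qed.

End Slices.

Section Translation.
Variables (R : realType) (n : nat).
Local Notation pt := 'rV[R]_n.+1.
Implicit Types (f : pt -> R) (a x v : pt) (c : R).

Lemma diff_quot_translate f a c x v :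
  (fun h : R => h^-1 *: (((fun z => f (z - a) + c) \o shift x) (h *: v)
                         - (f (x - a) + c))) =
  (fun h : R => h^-1 *: ((f \o shift (x - a)) (h *: v) - f (x - a))).
Proof. by apply: funext => h /=; rewrite -[h *: v + x - a]addrA; congr (_ *: _); ring. Qed.

Lemma derive_translate f a c x v :
  derive (fun z => f (z - a) + c) x v = derive f (x - a) v.
Proof. by rewrite /derive diff_quot_translate. Qed.

Lemma derivable_translate f a c x v :
  derivable f (x - a) v -> derivable (fun z => f (z - a) + c) x v.
Proof. by rewrite /derivable diff_quot_translate. Qed.

(* The [+ 0] keeps the result a translate, so the lemma applies again to the
   second derivatives. *)
Lemma pderiv_translate i f a c :
  pderiv i (fun z => f (z - a) + c) = (fun z => pderiv i f (z - a) + 0).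
Proof. by apply: funext => z; rewrite /pderiv derive_translate addr0. Qed.

Lemma continuous_translate f a c x :
  {for x - a, continuous f} -> {for x, continuous (fun z : pt => f (z - a) + c)}.
Proof.
move=> fc.
have sub_cont : {for x, continuous (fun z : pt => z - a)}.
  exact: (@cvgB _ _ _ (nbhs x) _ (fun z : pt => z) (fun _ => a) x a cvg_id (cvg_cst a)).
exact: (@cvgD _ _ _ (nbhs x) _ (fun z => f (z - a)) (fun _ => c) _ _
  (continuous_comp sub_cont fc) (cvg_cst c)).
Qed.

Lemma C2_on_translate (U V : set pt) f a c :
  C2_on U f -> (forall z, V z -> U (z - a)) ->
  C2_on V (fun z => f (z - a) + c).
Proof.
move=> fC2 VU x Vx i j; have [di [dij cij]] := fC2 _ (VU _ Vx) i j.
split; first exact: derivable_translate.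
rewrite !pderiv_translate; split; first exact: derivable_translate.
exact: continuous_translate cij.
Qed.

Lemma hessian_translate f a c x :
  hessian (fun z => f (z - a) + c) x = hessian f (x - a).
Proof. by apply/matrixP => i j; rewrite !mxE !pderiv_translate addr0. Qed.

End Translation.

Section Modulus.
Variables (R : realType) (n : nat).
Local Notation pt := 'rV[R]_n.+1.

(* Below delta the set defining the modulus is bounded, so [sup] is not a junk value. *)
Lemma unif_cont_modulus (D : set pt) (h : pt -> R) :
  unif_cont_on D h -> exists2 delta : R, 0 < delta &
    forall m, m < delta -> forall x y, D x -> D y -> enorm (x - y) <= m ->
      h x - modulus D h m <= h y.
Proof.
move=> /(_ 1 ltr01) [delta delta0 hc]; exists delta => // m m_lt x y Dx Dy xy.
have hs : has_sup [set z | exists x y,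
    [/\ D x, D y, enorm (x - y) <= m & z = `|h x - h y| ]].
  split; first by exists `|h x - h y|; exists x, y.
  exists 1 => _ [a [b [Da Db ab ->]]]; apply/ltW/hc => //.
  exact: le_lt_trans ab m_lt.
have := sup_upper_bound hs (ex_intro _ x (ex_intro _ y (And4 Dx Dy xy erefl))).
by rewrite -/(modulus D h m); have := ler_norm (h x - h y); lra.
Qed.

End Modulus.

Lemma supnorm1_ub (R : realType) (n : nat) (u : 'rV[R]_n.+1 -> R) :
  (exists M : R, forall x, eball 0 1 x -> `|u x| <= M) ->
  (forall x, eball 0 1 x -> `|u x| <= supnorm1 u) /\ 0 <= supnorm1 u.
Proof.
move=> [M u_le]; have B0 : eball 0 1 (0 : 'rV[R]_n.+1) by rewrite eball0E enorm0.
have hs : has_sup [set `|u x| | x in eball 0 1].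
  by split; [exists `|u 0|, 0 | exists M => _ [x hx <-]; exact: u_le].
have ub x : eball 0 1 x -> `|u x| <= supnorm1 u.
  by move=> hx; apply: (sup_upper_bound hs); exists x.
by split => //; apply: le_trans (ub 0 B0).
Qed.

Lemma sqrt_lt_small_eps (R : realType) (S delta : R) : 0 <= S -> 0 < delta ->
  exists2 eps0 : R, 0 < eps0 &
    forall eps, 0 < eps -> eps < eps0 -> Num.sqrt (2 * eps * S) < delta.
Proof.
move=> S0 delta0; have S1 : 0 < 2 * (S + 1) by rewrite mulr_gt0 // ltr_wpDl.
exists (delta ^+ 2 / (2 * (S + 1))) => [|eps eps0]; first by rewrite divr_gt0 // exprn_gt0.
rewrite ltr_pdivlMr // => eps_lt.
rewrite -(ger0_norm (ltW delta0)) -sqrtr_sqr ltr_sqrt ?exprn_gt0 //.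
by apply: le_lt_trans eps_lt; nra.
Qed.

Section Envelope.
Variables (R : realType) (n : nat) (u : 'rV[R]_n.+1 -> R) (rho eps S : R).
Local Notation pt := 'rV[R]_n.+1.
Implicit Types x y p : pt.
Hypotheses (rho_lt1 : rho < 1) (eps_gt0 : 0 < eps).
Hypothesis u_le : forall x, eball 0 1 x -> `|u x| <= S.
Hypothesis u_usc : usc_on (eball 0 1) u.

Local Notation uenv := (uenv u rho eps).
Let penalized x y := u x - dist'2 x y / eps.

Lemma le_rho_ball1 x : enorm x <= rho -> eball 0 1 x.
Proof. by rewrite eball0E => /le_lt_trans; apply. Qed.

Lemma penalized_le x y : ecball 0 rho x -> penalized x y <= S.
Proof.
rewrite ecball0E => /le_rho_ball1/u_le ux.
have : 0 <= dist'2 x y / eps by rewrite divr_ge0 ?dist'2_ge0 ?ltW.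
by have := ler_norm (u x); rewrite /penalized; lra.
Qed.

Lemma uenv_has_sup y : (exists x, ecball 0 rho x /\ xn x = xn y) ->
  has_sup [set penalized x y | x in [set x | ecball 0 rho x /\ xn x = xn y]].
Proof.
move=> [x hx]; split; first by exists (penalized x y), x.
by exists S => _ [z [hz _] <-]; exact: penalized_le.
Qed.

Lemma uenv_ge y x : ecball 0 rho x -> xn x = xn y -> penalized x y <= uenv y.
Proof.
move=> hx xy; apply: sup_upper_bound; last by exists x.
by apply: uenv_has_sup; exists x.
Qed.

Lemma uenv_approx y d : 0 < d -> ecball 0 rho y ->
  exists x, [/\ ecball 0 rho x, xn x = xn y & uenv y - d < penalized x y].
Proof.
move=> d0 hy; have hs : has_sup _ := uenv_has_sup (ex_intro _ y (conj hy erefl)).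
by have [_ [x [hx xy] <-] ?] := sup_adherent d0 hs; exists x.
Qed.

(* Upper semicontinuity of u and Lipschitz continuity of dist'2 on the unit
   ball, with tolerance eta/2 each. *)
Lemma penalized_usc p y eta : enorm p <= rho -> enorm y <= 1 -> 0 < eta ->
  exists2 delta, 0 < delta & forall x y', enorm x <= rho -> enorm y' <= 1 ->
    enorm (x - p) < delta -> enorm (y' - y) < delta ->
    penalized x y' < penalized p y + eta.
Proof.
move=> hp hy eta0; have le1 x : enorm x <= rho -> enorm x <= 1.
  by move=> /le_trans; apply; exact: ltW.
have [d1 d10 usc_p] := u_usc (le_rho_ball1 hp) (divr_gt0 eta0 (ltr0Sn R 1)).
have N0 : 0 < (n.+1)%:R :> R by rewrite ltr0n.
set d2 := eta * eps / (16 * (n.+1)%:R).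
have d20 : 0 < d2 by rewrite !divr_gt0 ?mulr_gt0.
exists (Num.min d1 d2) => [|x y' hx hy' xp yy]; first by rewrite lt_min d10 d20.
move: xp yy; rewrite !lt_min => /andP[xp1 xp2] /andP[_ yy2].
have ux : u x < u p + eta / 2 by apply: usc_p => //; exact: le_rho_ball1.
have := dist'2_lipschitz (le1 _ hp) hy (le1 _ hx) hy'.
rewrite enormBC [enorm (y - y')]enormBC => lip.
have dist_small : dist'2 p y - dist'2 x y' < eta * eps / 2.
  apply: le_lt_trans lip _.
  have -> : eta * eps / 2 = 4 * (n.+1)%:R * (2 * d2).
    by rewrite /d2; field; rewrite addrC natr1 pnatr_eq0.
  by rewrite ltr_pM2l ?mulr_gt0 //; lra.
have : (dist'2 p y - dist'2 x y') / eps < eta / 2 by rewrite ltr_pdivrMr // mulrAC.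
by rewrite /penalized mulrBl; lra.
Qed.

Lemma penalized_cluster y a : enorm y < 1 ->
  (forall d, 0 < d -> exists y' x, [/\ enorm y' < 1, enorm (y' - y) < d,
      ecball 0 rho x, xn x = xn y' & a - d < penalized x y']) ->
  exists p, [/\ ecball 0 rho p, xn p = xn y & a <= penalized p y].
Proof.
move=> hy approx.
pose A d := [set x | exists y', [/\ enorm y' < 1, enorm (y' - y) < d,
      ecball 0 rho x, xn x = xn y' & a - d < penalized x y']].
have [p clp] : exists p, forall d e, 0 < d -> 0 < e -> exists2 x, A d x & eball p e x.
  apply: enorm_cluster => [d d0|d1 d2 d10 d12 x|d x d0].
  - by have [y' [x hx]] := approx d d0; exists x, y'.
  - move=> [y' [h1 h2 h3 h4 h5]]; exists y'; split => //; first exact: lt_le_trans h2 d12.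
    by apply: le_lt_trans h5; rewrite lerB.
  - move=> [y' [_ _ + _ _]]; rewrite ecball0E => /le_trans; apply; exact: ltW.
have p_rho : enorm p <= rho.
  rewrite leNgt; apply/negP => rho_p.
  have gap : 0 < enorm p - rho by rewrite subr_gt0.
  have [x [y' [_ _ + _ _]]] := clp 1 _ ltr01 gap.
  rewrite ecball0E /eball /= => hx xp.
  by have := enorm_le_addB x p; rewrite enormBC; lra.
have p_slice : xn p = xn y.
  apply/eqP; rewrite -subr_eq0; apply/negP => /negP ne_py.
  set q := `|xn p - xn y|; have q0 : 0 < q by rewrite normr_gt0.
  have q2 : 0 < q / 2 by rewrite divr_gt0.
  have [x [y' [_ yy' _ xy' _]] xp] := clp _ _ q2 q2.
  have := le_lt_trans (coord_le_enorm (x - p) ord_max) xp.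
  have := le_lt_trans (coord_le_enorm (y' - y) ord_max) yy'.
  rewrite !mxE -/(xn x) -/(xn p) -/(xn y') -/(xn y) -xy' !ltr_norml.
  move=> /andP[? ?] /andP[? ?]; suff : q < q by rewrite ltxx.
  by rewrite {1}/q ltr_norml; apply/andP; split; lra.
exists p; split; rewrite ?ecball0E //; rewrite leNgt; apply/negP => gap.
set eta := a - penalized p y; have eta0 : 0 < eta by rewrite subr_gt0.
have [delta delta0 usc_p] :=
  penalized_usc p_rho (ltW hy) (divr_gt0 eta0 (ltr0Sn R 1)).
have m0 : 0 < Num.min delta (eta / 2) by rewrite lt_min delta0 divr_gt0.
have [x [y' [y'1 yy' x_rho _ ax]] xp] := clp _ _ m0 delta0.
rewrite ecball0E in x_rho.
have yy : enorm (y' - y) < delta by rewrite (lt_le_trans yy') // ge_min lexx.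
have := usc_p x y' x_rho (ltW y'1) xp yy.
have : Num.min delta (eta / 2) <= eta / 2 by rewrite ge_min lexx orbT.
by rewrite /eta; lra.
Qed.

Lemma uenv_attained y : ecball 0 rho y ->
  exists xs, [/\ ecball 0 rho xs, xn xs = xn y & penalized xs y = uenv y].
Proof.
move=> hy; have y1 : enorm y < 1 by apply: le_lt_trans rho_lt1; rewrite -ecball0E.
have [|p [hp py le_p]] := @penalized_cluster y (uenv y) y1.
  move=> d d0; have [x [hx xy ax]] := uenv_approx d0 hy.
  by exists y, x; rewrite subrr enorm0.
by exists p; split => //; apply/eqP; rewrite eq_le le_p uenv_ge.
Qed.

Lemma uenv_usc r : r <= rho -> usc_on (eball 0 r) uenv.
Proof.
move=> r_rho y hy e e0; have ball_rho x : eball 0 r x -> ecball 0 rho x.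
  by rewrite eball0E ecball0E => /ltW /le_trans; apply.
have y1 : enorm y < 1 by apply: le_lt_trans rho_lt1; rewrite -ecball0E; exact: ball_rho.
apply: contrapT => no_delta.
have jumps d : 0 < d -> exists y', [/\ eball 0 r y', enorm (y' - y) < d &
    uenv y + e <= uenv y'].
  move=> d0; apply: contrapT => no_y'; apply: no_delta; exists d => // y' hy' yy'.
  by rewrite ltNge; apply/negP => jump; apply: no_y'; exists y'.
have [|p [hp py le_p]] := @penalized_cluster y (uenv y + e / 2) y1.
  move=> d d0; have [y' [hy' yy' jump]] := jumps d d0.
  have [x [hx xy ax]] := uenv_approx (divr_gt0 e0 (ltr0Sn R 1)) (ball_rho _ hy').
  exists y', x; split => //; last by lra.
  by apply: le_lt_trans rho_lt1; rewrite -ecball0E; exact: ball_rho.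
by have := uenv_ge hp py; lra.
Qed.

Lemma uenv_argmax_near y xs : ecball 0 rho y -> ecball 0 rho xs ->
  penalized xs y = uenv y -> dist'2 xs y <= 2 * eps * S.
Proof.
move=> hy hxs max_xs; have := uenv_ge hy (erefl (xn y)).
rewrite -max_xs /penalized dist'2xx mul0r subr0 mulrAC -ler_pdivrMr //.
move: hy hxs; rewrite !ecball0E => /le_rho_ball1/u_le uy /le_rho_ball1/u_le uxs.
by move: uy uxs; rewrite !ler_norml => /andP[? ?] /andP[? ?]; lra.
Qed.

Lemma uenv_touch_translate r x0 phi d :
  r <= rho - Num.sqrt (2 * eps * S) -> eball 0 r x0 -> 0 < d ->
  touches_above (eball 0 r) uenv phi x0 d ->
  exists xs d', [/\ 0 < d' <= d, xn xs = xn x0,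
    enorm (xs - x0) <= Num.sqrt (2 * eps * S), enorm xs < 1 &
    touches_above (eball 0 1) u
      (fun z => phi (z - (xs - x0)) + dist'2 xs x0 / eps) xs d'].
Proof.
set reps := Num.sqrt _ => r_le; rewrite eball0E => x0r d0 [touch_x0 touch_le].
have reps0 : 0 <= reps := sqrtr_ge0 _.
have x0_rho : ecball 0 rho x0 by rewrite ecball0E; lra.
have [xs [xs_rho xs_slice max_xs]] := uenv_attained x0_rho.
have xs_x0 : enorm (xs - x0) <= reps.
  by rewrite enormB_slice // ler_wsqrtr // uenv_argmax_near.
have xs_lt : enorm xs < rho by have := enorm_le_addB x0 xs; lra.
set d' := Num.min d (Num.min (r - enorm x0) (rho - enorm xs)).
have d'_gt0 : 0 < d' by rewrite !lt_min d0 !subr_gt0 x0r xs_lt.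
have [d'_d d'_x0 d'_xs] : [/\ d' <= d, d' <= r - enorm x0 & d' <= rho - enorm xs].
  by rewrite !ge_min !lexx !orbT.
exists xs, d'; split; rewrite ?d'_gt0 ?d'_d //; first exact: lt_trans rho_lt1.
split; first by rewrite /= subKr touch_x0 -max_xs /penalized subrK.
move=> z _; rewrite /eball /= => z_xs; set w := z - (xs - x0).
have w_x0 : w - x0 = z - xs := translate_subr z xs x0.
have w_r : eball 0 r w.
  by rewrite eball0E; have := enorm_le_addB x0 w; rewrite w_x0; lra.
have z_rho : ecball 0 rho z by rewrite ecball0E; have := enorm_le_addB xs z; lra.
have := uenv_ge z_rho (esym (xn_translate z xs_slice)).
have := touch_le w w_r; rewrite /eball /= w_x0 => /(_ (lt_le_trans z_xs d'_d)).
by rewrite /penalized dist'2_translate; lra.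
Qed.

End Envelope.

Section Subsolution.
Variables (R : realType) (n : nat) (u : 'rV[R]_n.+1 -> R) (rho eps S r : R).
Local Notation pt := 'rV[R]_n.+1.
Hypotheses (rho_lt1 : rho < 1) (eps_gt0 : 0 < eps).
Hypothesis u_le : forall x, eball 0 1 x -> `|u x| <= S.
Hypothesis u_usc : usc_on (eball 0 1) u.
Hypothesis r_le : r <= rho - Num.sqrt (2 * eps * S).

Local Notation uenv := (uenv u rho eps).

Lemma lt_r_lt1 (x : pt) : enorm x < r -> enorm x < 1.
Proof.
move=> /lt_le_trans; apply; apply: le_trans r_le _.
by rewrite lerBlDr; apply: ler_wpDr (sqrtr_ge0 _) (ltW rho_lt1).
Qed.

Lemma uenv_sub_interior (s : R -> Prop) (F : 'M[R]_n.+1 -> R) (f : pt -> R) c :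
  (forall x0 phi d, [set x | enorm x < 1 /\ s (xn x)] x0 -> 0 < d ->
     C2_on (eball x0 d) phi -> touches_above (eball 0 1) u phi x0 d ->
     f x0 <= F (hessian phi x0)) ->
  (forall x y, [set x | enorm x < 1 /\ s (xn x)] x ->
     [set x | enorm x < 1 /\ s (xn x)] y ->
     enorm (x - y) <= Num.sqrt (2 * eps * S) -> f x - c <= f y) ->
  forall x0 phi d, [set x | enorm x < r /\ s (xn x)] x0 -> 0 < d ->
    C2_on (eball x0 d) phi -> touches_above (eball 0 r) uenv phi x0 d ->
    f x0 - c <= F (hessian phi x0).
Proof.
move=> u_sub f_osc x0 phi d [x0r sx0] d0 phiC2 touch.
have x0_ball : eball 0 r x0 by rewrite eball0E.
have [xs [d' [/andP[d'0 d'd] xs_slice xs_x0 xs1 touch_xs]]] :=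
  uenv_touch_translate rho_lt1 eps_gt0 u_le u_usc r_le x0_ball d0 touch.
have xs_in : [set x | enorm x < 1 /\ s (xn x)] xs by split; rewrite // xs_slice.
have ball_shift z : eball xs d' z -> eball x0 d (z - (xs - x0)).
  by move=> /(eball_translate x0) /lt_le_trans; apply.
have := u_sub _ _ _ xs_in d'0 (C2_on_translate _ phiC2 ball_shift) touch_xs.
rewrite hessian_translate subKr; apply: le_trans; apply: f_osc => //.
  by split => //; exact: lt_r_lt1.
by rewrite enormBC.
Qed.

Lemma uenv_sub_flat (g : pt -> R) c :
  (forall x0 phi d (psip psim : pt -> R) d', Tflat 1 x0 -> 0 < d -> d < d' ->
     {in eball x0 d, continuous phi} ->
     C2_on (eball x0 d') psip -> (forall y, ecball x0 d y -> 0 <= xn y -> phi y = psip y) ->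
     C2_on (eball x0 d') psim -> (forall y, ecball x0 d y -> xn y <= 0 -> phi y = psim y) ->
     touches_above (eball 0 1) u phi x0 d ->
     g x0 <= pderiv ord_max psip x0 - pderiv ord_max psim x0) ->
  (forall x y, Tflat 1 x -> Tflat 1 y ->
     enorm (x - y) <= Num.sqrt (2 * eps * S) -> g x - c <= g y) ->
  forall x0 phi d (psip psim : pt -> R) d', Tflat r x0 -> 0 < d -> d < d' ->
    {in eball x0 d, continuous phi} ->
    C2_on (eball x0 d') psip -> (forall y, ecball x0 d y -> 0 <= xn y -> phi y = psip y) ->
    C2_on (eball x0 d') psim -> (forall y, ecball x0 d y -> xn y <= 0 -> phi y = psim y) ->
    touches_above (eball 0 r) uenv phi x0 d ->
    g x0 - c <= pderiv ord_max psip x0 - pderiv ord_max psim x0.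
Proof.
move=> u_sub g_osc x0 phi d psip psim d'' [x0r x00] d0 dd'' phi_cont.
move=> psipC2 phi_psip psimC2 phi_psim touch.
have x0_ball : eball 0 r x0 by rewrite eball0E.
have [xs [d' [/andP[d'0 d'd] xs_slice xs_x0 xs1 touch_xs]]] :=
  uenv_touch_translate rho_lt1 eps_gt0 u_le u_usc r_le x0_ball d0 touch.
set c' := dist'2 xs x0 / eps in touch_xs.
have shift_cont : {in eball xs d', continuous (fun z : pt => phi (z - (xs - x0)) + c')}.
  move=> z; rewrite in_setE => /(eball_translate x0) z_ball; apply: continuous_translate.
  by apply: phi_cont; rewrite in_setE; apply: lt_le_trans z_ball d'd.
have agree (psi : pt -> R) (side : R -> Prop) :
    (forall y, ecball x0 d y -> side (xn y) -> phi y = psi y) ->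
    forall y, ecball xs d' y -> side (xn y) ->
      phi (y - (xs - x0)) + c' = psi (y - (xs - x0)) + c'.
  move=> phi_psi y /(ecball_translate x0) y_ball y_side.
  by rewrite phi_psi ?xn_translate //; apply: le_trans y_ball _.
have := u_sub xs _ d' _ _ d'' (conj xs1 (etrans xs_slice x00)) d'0
  (le_lt_trans d'd dd'') shift_cont
  (C2_on_translate c' psipC2 (fun z => @eball_translate _ _ xs x0 z d'')) (agree _ (fun t => 0 <= t) phi_psip)
  (C2_on_translate c' psimC2 (fun z => @eball_translate _ _ xs x0 z d'')) (agree _ (fun t => t <= 0) phi_psim) touch_xs.
rewrite !pderiv_translate subKr !addr0; apply: le_trans; apply: g_osc.
- by split => //; exact: lt_r_lt1.
- by split => //; rewrite xs_slice.
- by rewrite enormBC.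
Qed.

End Subsolution.

Theorem mainTheorem11 (R : realType) (n : nat) (lam Lam : R)
  (Fp Fm : 'M[R]_n.+1 -> R) (fp fm g u : 'rV[R]_n.+1 -> R) (rho : R) :
  0 < lam -> lam <= Lam ->
  elliptic lam Lam Fp -> elliptic lam Lam Fm ->
  unif_cont_on (Bplus 1) fp -> unif_cont_on (Bminus 1) fm ->
  unif_cont_on (Tflat 1) g ->
  (exists M : R, forall x, eball 0 1 x -> `|u x| <= M) ->
  visc_sub Fp Fm fp fm g 1 u ->
  0 < rho -> rho < 1 ->
  exists2 eps0 : R, 0 < eps0 &
    forall eps : R, 0 < eps -> eps < eps0 ->
      let reps := Num.sqrt (2 * eps * supnorm1 u) in
      forall r : R, r <= rho - reps ->
        visc_sub Fp Fm
          (fun x => fp x - modulus (Bplus 1) fp reps)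
          (fun x => fm x - modulus (Bminus 1) fm reps)
          (fun x => g x - modulus (Tflat 1) g reps)
          r (uenv u rho eps).
Proof.
move=> _ _ _ _ fp_uc fm_uc g_uc u_bdd [u_usc [u_subp [u_subm u_subg]]] _ rho_lt1.
have [u_le S0] := supnorm1_ub u_bdd.
have [dp dp0 fp_osc] := unif_cont_modulus fp_uc.
have [dm dm0 fm_osc] := unif_cont_modulus fm_uc.
have [dg dg0 g_osc] := unif_cont_modulus g_uc.
have [eps0 eps00 reps_small] :=
  sqrt_lt_small_eps S0 (ltac:(by rewrite !lt_min dp0 dm0 dg0) :
    0 < Num.min dp (Num.min dm dg)).
exists eps0 => // eps eps_gt0 eps_lt reps r r_le.
have := reps_small eps eps_gt0 eps_lt; rewrite -/reps !lt_min => /and3P[rp rm rg].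
have reps0 : 0 <= reps := sqrtr_ge0 _.
split; first by apply: (uenv_usc (S := supnorm1 u)) => //; lra.
split; first exact: (uenv_sub_interior (s := fun t => 0 < t) rho_lt1 eps_gt0 u_le
  u_usc r_le u_subp (fp_osc _ rp)).
split; first exact: (uenv_sub_interior (s := fun t => t < 0) rho_lt1 eps_gt0 u_le
  u_usc r_le u_subm (fm_osc _ rm)).
exact: (uenv_sub_flat rho_lt1 eps_gt0 u_le u_usc r_le u_subg (g_osc _ rg)).
Qed.
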